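(* Let $L\subset L(p,1)$ be a framed oriented link with diagram $D$, augmented fundamental rack $R(D)$ and automorphism $A$ as in the setup, and let $X$ be a finite rack. Suppose $f\colon R(D)\to X$ satisfies $f(x\triangleright y)=f(x)\triangleright f(y)$ for all $x,y\in R(D)$. Then for all $z,w\in R(D)$: if $f(A^k(z))=f(A^k(w))$ for all $0\le k\le p-1$, then $f(A^k(z))=f(A^k(w))$ for all $k\in\mathbb{N}$.
   Context: A rack is a nonempty set with a binary operation $\triangleright$ such that (R1) for all $x,y$ there is a unique $z$ with $z\triangleright y=x$, and (R2) $(x\triangleright y)\triangleright z=(x\triangleright z)\triangleright(y\triangleright z)$. Write $t\triangleright\overline y$ for the unique $z$ with $z\triangleright y=t$, $t\triangleright y^{\pm1}$ for $t\triangleright y$ resp. $t\triangleright\overline y$; iterated expressions are parenthesized from the left. Setup: $L(p,1)$ is $p$-surgery on an unknot $U\subset S^3$ drawn with $p$ positive kinks; the diagram $D$ of $L\cup U$ has $d\ge 0$ strands of $L$ passing through the disk bounded by $U$, $m$ crossings with both strands in $L$, arcs of $L$ labelled $x_1,\dots,x_{m+d}$ where for $i\le d$ the arc $x_i$ becomes $x_{m+i}$ upon passing under the arc $a$ of $U$; $\epsilon_i\in\{\pm1\}$ is $1$ if $x_i$ follows $x_{m+i}$ in the orientation of $L$ and $-1$ otherwise; crossing relations are $x_i\triangleright x_j=x_l$ for over-arc $x_j$, under-arc $x_i$ on its right and $x_l$ on its left. $R(D)$ is the rack with general presentation (generators $x_i$ primary, $a$ operator; the operator group acts on itself by conjugation)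 $[\{x_1,\dots,x_{m+d}\},\{a\}:\{\text{crossing relations},\ x_i^a=x_{m+i}\ (1\le i\le d)\},\{a^p\equiv x_d^{\epsilon_d}\cdots x_1^{\epsilon_1}\}]$ if $d>0$ and $[\{x_1,\dots,x_m\},\{a\}:\{\text{crossing relations}\},\{a^p\equiv1\}]$ if $d=0$. $A\colon R(D)\to R(D)$ is the rack automorphism $A(x)=x^a$, and $F(x)=x\triangleright x_d^{\epsilon_d}\triangleright\cdots\triangleright x_1^{\epsilon_1}$ (if $d>0$), $F=\mathrm{id}$ (if $d=0$); one has $A^p=F$. *)

From Stdlib Require Import List ClassicalEpsilon.
Import ListNotations.

Record rack := Rack {
  rcar :> Type;
  rop : rcar -> rcar -> rcar;
  rnonempty : inhabited rcar;
  rR1 : forall x y : rcar, exists! z : rcar, rop z y = x;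
  rR2 : forall x y z : rcar, rop (rop x y) z = rop (rop x z) (rop y z)
}.

Arguments rop {r} _ _.

(* t |> bar y : the unique z with z |> y = t. *)
Definition rbar {X : rack} (t y : X) : X :=
  proj1_sig (constructive_indefinite_description _
    (ex_intro _ _ (proj1 (proj2_sig (constructive_indefinite_description _ (rR1 X t y)))))
    : {z : X | rop z y = t}).

(* t |> y^{eps}: eps = true means +1, false means -1. *)
Definition ract {X : rack} (t y : X) (eps : bool) : X :=
  if eps then rop t y else rbar t y.

Definition rack_hom {X Y : rack} (f : X -> Y) : Prop :=
  forall x y : X, f (rop x y) = rop (f x) (f y).

Definition rack_aut {X : rack} (A : X -> X) : Prop :=
  rack_hom A /\ (exists B : X -> X, (forall x, B (A x) = x) /\ (forall x, A (B x) = x)).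

(* Fiter xs eps i t = t |> x_i^{eps_i} |> x_{i-1}^{eps_{i-1}} |> ... |> x_1^{eps_1}
   (parenthesized from the left). *)
Fixpoint Fiter {X : rack} (xs : nat -> X) (eps : nat -> bool) (i : nat) (t : X) : X :=
  match i with
  | 0 => t
  | S j => Fiter xs eps j (ract t (xs (S j)) (eps (S j)))
  end.

Definition Fmap {X : rack} (xs : nat -> X) (eps : nat -> bool) (d : nat) : X -> X :=
  Fiter xs eps d.

Definition finite_rack (X : rack) : Prop :=
  exists l : list X, forall x : X, In x l.

(* A^p = F, and F(t) = t |> x_d^{e_d} |> ... |> x_1^{e_1} is built from rack
   operations only, so f(F t) depends on t only through f(t). *)

From Stdlib Require Import Lia PeanoNat ClassicalEpsilon.

Lemma rbar_spec {X : rack} (t y : X) : rop (rbar t y) y = t.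
Proof. unfold rbar. destruct (constructive_indefinite_description _ _) as [z hz]. exact hz. Qed.

Lemma rbar_uniq {X : rack} (t y z : X) : rop z y = t -> z = rbar t y.
Proof.
  intro H. destruct (rR1 X t y) as [u [_ hu]].
  rewrite <- (hu z H). apply hu, rbar_spec.
Qed.

Section RackHom.

Variables (X Y : rack) (f : X -> Y).
Hypothesis hf : rack_hom f.

Lemma hom_rbar (t y : X) : f (rbar t y) = rbar (f t) (f y).
Proof. apply rbar_uniq. rewrite <- hf. now rewrite rbar_spec. Qed.

Lemma hom_ract (t y : X) (e : bool) : f (ract t y e) = ract (f t) (f y) e.
Proof. destruct e; simpl; [apply hf | apply hom_rbar]. Qed.

Lemma hom_Fiter (xs : nat -> X) (eps : nat -> bool) (i : nat) (t : X) :
  f (Fiter xs eps i t) = Fiter (fun j => f (xs j)) eps i (f t).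
Proof.
  revert t; induction i as [|i IH]; intro t; simpl; [reflexivity|].
  now rewrite IH, hom_ract.
Qed.

Lemma hom_Fmap_congr (xs : nat -> X) (eps : nat -> bool) (d : nat) (t t' : X) :
  f t = f t' -> f (Fmap xs eps d t) = f (Fmap xs eps d t').
Proof. intro H. unfold Fmap. now rewrite !hom_Fiter, H. Qed.

End RackHom.

Lemma iter_agree_of_power {T U : Type} (f : T -> U) (g h : T -> T) (p : nat) :
  0 < p -> (forall x, Nat.iter p g x = h x) ->
  (forall t t', f t = f t' -> f (h t) = f (h t')) ->
  forall z w, (forall k, k < p -> f (Nat.iter k g z) = f (Nat.iter k g w)) ->
  forall k, f (Nat.iter k g z) = f (Nat.iter k g w).
Proof.
  intros hp hgp hh z w Hlow k.
  induction k as [k IH] using (well_founded_induction Wf_nat.lt_wf).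
  destruct (Nat.lt_ge_cases k p) as [Hk|Hk]; [now apply Hlow|].
  replace k with (p + (k - p)) by lia.
  rewrite !Nat.iter_add, !hgp.
  apply hh, IH; lia.
Qed.

Theorem lemma3 (p : nat) (hp : 0 < p) (RD : rack) (A : RD -> RD) (hA : rack_aut A)
    (d : nat) (xs : nat -> RD) (eps : nat -> bool)
    (hAp : forall x : RD, Nat.iter p A x = Fmap xs eps d x)
    (X : rack) (hX : finite_rack X) (f : RD -> X) (hf : rack_hom f) :
  forall z w : RD,
    (forall k : nat, k <= p - 1 -> f (Nat.iter k A z) = f (Nat.iter k A w)) ->
    forall k : nat, f (Nat.iter k A z) = f (Nat.iter k A w).
Proof.
  intros z w Hlow.
  apply (iter_agree_of_power f A (Fmap xs eps d) p hp hAp).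
  - exact (hom_Fmap_congr _ _ f hf xs eps d).
  - intros k Hk. apply Hlow. lia.
Qed.
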